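(* For every $\mathcal{L}_{\text{Ł}}^{\Box}$-formula $\varphi$: $\varphi$ is $\mathsf{K(Ł)}$-valid if and only if $\varphi^{*}$ is $\mathsf{K(A^c)}$-valid, where $^{*}$ is the translation defined in the context.
   Context: Formulas are built over a countably infinite set $\mathrm{Var}$ of variables. $\mathcal{L}_{\text{Ł}}^{\Box}$ has a binary connective $\supset$ and unary connectives $\sim$ and $\Box$. A $\mathsf{K(Ł)}$-model $\langle W,R,V\rangle$ consists of a nonempty set $W$, $R\subseteq W\times W$, and $V\colon\mathrm{Var}\times W\to[0,1]$ extended by $V(\sim\varphi,x)=1-V(\varphi,x)$, $V(\varphi\supset\psi,x)=\min(1,1-V(\varphi,x)+V(\psi,x))$, $V(\Box\varphi,x)=\inf_{[0,1]}\{V(\varphi,y):Rxy\}$ (infimum taken in $[0,1]$, so the empty infimum is $1$). A formula is $\mathsf{K(Ł)}$-valid if $V(\varphi,x)=1$ for all models and all $x$. The language $\mathcal{L}_{A^c}^{\Box}$ has binary $\wedge,\vee,\&,\to$, constants $\overline{0}$ and $c$, and unary $\Box$; $\neg\varphi:=\varphi\to\overline{0}$. A $\mathsf{K(A^c)}$-model $\langle W,R,V,c^{\mathfrak{M}}\rangle$ consists of a nonempty $W$, $R\subseteq W\times W$, a real $c^{\mathfrak{M}}$, and $V\colon\mathrm{Var}\times W\to[-r,r]$ for some real $r\ge0$, extended by: $\wedge$ as $\min$, $\vee$ as $\max$, $\&$ as $+$, $V(\varphi\to\psi,x)=V(\psi,x)-V(\varphi,x)$, $V(\overline{0},x)=0$,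 $V(c,x)=c^{\mathfrak{M}}$, $V(\Box\varphi,x)=\inf_{\mathbb{R}}\{V(\varphi,y):Rxy\}$ with the empty infimum equal to $0$. A formula is $\mathsf{K(A^c)}$-valid if $V(\varphi,x)\ge 0$ for all such models and all $x$. Let $\bot:=c\wedge\neg c$. The translation $^{*}$ from $\mathcal{L}_{\text{Ł}}^{\Box}$-formulas to $\mathcal{L}_{A^c}^{\Box}$-formulas is: $p^{*}=(p\wedge\overline{0})\vee\bot$ for $p\in\mathrm{Var}$, $(\sim\varphi)^{*}=\varphi^{*}\to\bot$, $(\varphi\supset\psi)^{*}=(\varphi^{*}\to\psi^{*})\wedge\overline{0}$, $(\Box\varphi)^{*}=\Box\varphi^{*}$. *)

From HB Require Import structures.
From mathcomp Require Import all_boot all_order all_algebra.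
From mathcomp Require Import boolp classical_sets reals.
From mathcomp Require Import Rstruct.
From Stdlib Require Import Reals.
Set Implicit Arguments. Unset Strict Implicit. Unset Printing Implicit Defensive.
Import Order.TTheory GRing.Theory Num.Theory.
Local Open Scope classical_set_scope.
Local Open Scope ring_scope.

Notation real := Rdefinitions.R.

Inductive fmL : Type :=
| LVar : nat -> fmL
| LNeg : fmL -> fmL
| LImp : fmL -> fmL -> fmL
| LBox : fmL -> fmL.

Inductive fmA : Type :=
| AVar  : nat -> fmA
| AMeet : fmA -> fmA -> fmA
| AJoin : fmA -> fmA -> fmA
| AFus  : fmA -> fmA -> fmA
| AImp  : fmA -> fmA -> fmA
| AZero : fmA
| AC    : fmA
| ABox  : fmA -> fmA.

Definition ANeg (a : fmA) : fmA := AImp a AZero.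
Definition ABot : fmA := AMeet AC (ANeg AC).

Fixpoint trans (f : fmL) : fmA :=
  match f with
  | LVar p => AJoin (AMeet (AVar p) AZero) ABot
  | LNeg g => AImp (trans g) ABot
  | LImp g h => AMeet (AImp (trans g) (trans h)) AZero
  | LBox g => ABox (trans g)
  end.

(* K(Ł) semantics.  Box: infimum in [0,1]; the empty infimum is 1.
   For a nonempty subset of [0,1] the infimum in [0,1] is the real infimum. *)
Fixpoint evalL (W : Type) (Rel : W -> W -> Prop) (V : nat -> W -> real)
    (f : fmL) (x : W) : real :=
  match f with
  | LVar p => V p x
  | LNeg g => 1 - evalL Rel V g x
  | LImp g h => Num.min 1 (1 - evalL Rel V g x + evalL Rel V h x)
  | LBox g =>
      if pselect (exists y, Rel x y)
      then inf [set evalL Rel V g y | y in [set y | Rel x y]]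
      else 1
  end.

Definition KL_model (W : Type) (Rel : W -> W -> Prop) (V : nat -> W -> real) : Prop :=
  inhabited W /\ forall p x, 0 <= V p x <= 1.

Definition KL_valid (f : fmL) : Prop :=
  forall (W : Type) (Rel : W -> W -> Prop) (V : nat -> W -> real),
    KL_model Rel V -> forall x : W, evalL Rel V f x = 1.

Fixpoint evalA (W : Type) (Rel : W -> W -> Prop) (V : nat -> W -> real)
    (c : real) (f : fmA) (x : W) : real :=
  match f with
  | AVar p => V p x
  | AMeet g h => Num.min (evalA Rel V c g x) (evalA Rel V c h x)
  | AJoin g h => Num.max (evalA Rel V c g x) (evalA Rel V c h x)
  | AFus g h => evalA Rel V c g x + evalA Rel V c h x
  | AImp g h => evalA Rel V c h x - evalA Rel V c g x
  | AZero => 0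
  | AC => c
  | ABox g =>
      if pselect (exists y, Rel x y)
      then inf [set evalA Rel V c g y | y in [set y | Rel x y]]
      else 0
  end.

Definition KA_model (W : Type) (Rel : W -> W -> Prop) (V : nat -> W -> real) : Prop :=
  inhabited W /\ exists r : real, 0 <= r /\ forall p x, - r <= V p x <= r.

Definition KA_valid (f : fmA) : Prop :=
  forall (W : Type) (Rel : W -> W -> Prop) (V : nat -> W -> real) (c : real),
    KA_model Rel V -> forall x : W, 0 <= evalA Rel V c f x.

From mathcomp Require Import all_boot all_order all_algebra.
From mathcomp Require Import boolp classical_sets reals Rstruct.
From mathcomp Require Import ring lra.
Set Implicit Arguments. Unset Strict Implicit. Unset Printing Implicit Defensive.
Import Order.TTheory GRing.Theory Num.Theory.
Local Open Scope classical_set_scope.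
Local Open Scope ring_scope.

(* In a K(A^c)-model with constant c, the formula [ABot] evaluates to
   -|c|.  Clamping every variable into [-|c|, 0] and rescaling onto [0, 1]
   yields a K(Ł)-model whose values are related to those of the translation by
   [t ↦ |c| (t - 1)]: this increasing affine map commutes with every connective,
   including the box, because infima commute with it.  So a K(Ł)-valid formula
   translates to one that evaluates to 0 everywhere.  Conversely, shifting a
   K(Ł)-model by -1 gives a K(A^c)-model with c = 1 in which the translation
   evaluates to the Łukasiewicz value minus 1, so nonnegativity forces value 1. *)

Lemma inf_affine (R : realType) (E : set R) (a b : R) :
  0 <= a -> has_inf E -> inf [set a * t + b | t in E] = a * inf E + b.
Proof.
move=> a_ge0 [[t0 Et0] lbE].
have F_lb : lbound [set a * t + b | t in E] (a * inf E + b).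
  by move=> _ [t Et <-]; rewrite lerD2r ler_wpM2l // ge_inf.
apply: le_anti; rewrite lb_le_inf ?andbT //; last by exists (a * t0 + b), t0.
have F_inf : has_lbound [set a * t + b | t in E] by exists (a * inf E + b).
have [a0|a_neq0] := eqVneq a 0.
  by apply: le_trans (ge_inf F_inf (ex_intro2 _ _ t0 Et0 erefl)) _; rewrite a0 !mul0r.
have a_gt0 : 0 < a by rewrite lt_def a_neq0.
rewrite -lerBlDr -ler_pdivrMl // mulrC.
apply: lb_le_inf; first by exists t0.
move=> t Et; rewrite ler_pdivrMr // mulrC lerBlDr.
by apply: ge_inf => //; exists t.
Qed.

Section KLSemantics.
Variables (W : Type) (Rel : W -> W -> Prop) (VL : nat -> W -> real).
(* The [1 - _] of the [LNeg] clause of [evalL] elaborates to Stdlib's [Rminus];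
   this restates it with ring subtraction. *)
Lemma evalL_negE g x : evalL Rel VL (LNeg g) x = 1 - evalL Rel VL g x.
Proof. by []. Qed.

Lemma evalL_box_serial g x : (exists y, Rel x y) ->
  evalL Rel VL (LBox g) x = inf [set evalL Rel VL g y | y in [set y | Rel x y]].
Proof. by move=> serial /=; case: pselect. Qed.

Lemma evalL_box_dead_end g x : ~ (exists y, Rel x y) -> evalL Rel VL (LBox g) x = 1.
Proof. by move=> dead_end /=; case: pselect. Qed.

Hypothesis VL_ge0_le1 : forall p x, 0 <= VL p x <= 1.

Lemma evalL_ge0_le1 f x : 0 <= evalL Rel VL f x <= 1.
Proof.
elim: f x => [p|g IH|g IHg h IHh|g IH] x; rewrite ?evalL_negE.
- exact: VL_ge0_le1.
- by move: (IH x) => /andP[? ?]; apply/andP; split; lra.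
- move: (IHg x) (IHh x) => /andP[g_ge0 g_le1] /andP[h_ge0 h_le1].
  by rewrite /= le_min ge_min ler01 lexx /= andbT; lra.
- have [[y Rxy]|dead_end] := pselect (exists y, Rel x y); last first.
    by rewrite evalL_box_dead_end // ler01 lexx.
  rewrite evalL_box_serial; last by exists y.
  have img_ge0 : lbound [set evalL Rel VL g z | z in [set z | Rel x z]] 0.
    by move=> _ [z _ <-]; case/andP: (IH z).
  rewrite lb_le_inf //=; last by exists (evalL Rel VL g y), y.
  apply: le_trans (ge_inf _ _) (proj2 (andP (IH y))); first by exists 0.
  by exists y.
Qed.

End KLSemantics.

Section KAcSemantics.
Variables (W : Type) (Rel : W -> W -> Prop) (V : nat -> W -> real) (c : real).

Lemma evalA_bot x : evalA Rel V c ABot x = - `|c|.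
Proof. by rewrite -minrN -sub0r. Qed.

Lemma evalA_box_serial g x : (exists y, Rel x y) ->
  evalA Rel V c (ABox g) x = inf [set evalA Rel V c g y | y in [set y | Rel x y]].
Proof. by move=> serial /=; case: pselect. Qed.

Lemma evalA_box_dead_end g x : ~ (exists y, Rel x y) -> evalA Rel V c (ABox g) x = 0.
Proof. by move=> dead_end /=; case: pselect. Qed.

End KAcSemantics.

Lemma clamp_ge_le (R : realDomainType) (a v : R) : 0 <= a ->
  - a <= Num.max (Num.min v 0) (- a) <= 0.
Proof. by move=> a_ge0; rewrite le_max ge_max ge_min !lexx !orbT oppr_le0. Qed.

Section Translation.
Variables (W : Type) (Rel : W -> W -> Prop) (V VL : nat -> W -> real) (c : real).
Hypothesis VL_ge0_le1 : forall p x, 0 <= VL p x <= 1.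
Hypothesis clamp_V : forall p x,
  Num.max (Num.min (V p x) 0) (- `|c|) = `|c| * (VL p x - 1).

Lemma evalA_trans f x :
  evalA Rel V c (trans f) x = `|c| * (evalL Rel VL f x - 1).
Proof.
elim: f x => [p|g IH|g IHg h IHh|g IH] x.
- have -> : evalA Rel V c (trans (LVar p)) x =
      Num.max (Num.min (V p x) 0) (evalA Rel V c ABot x) by [].
  by rewrite evalA_bot clamp_V.
- have -> : evalA Rel V c (trans (LNeg g)) x =
      evalA Rel V c ABot x - evalA Rel V c (trans g) x by [].
  by rewrite evalA_bot IH evalL_negE; ring.
- have -> : evalA Rel V c (trans (LImp g h)) x =
      Num.min (evalA Rel V c (trans h) x - evalA Rel V c (trans g) x) 0 by [].
  rewrite IHg IHh /= -mulrBr -[0 in LHS](mulr0 `|c|) -minr_pMr //.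
  by rewrite addr_minl subrr minC; congr (_ * Num.min _ _); ring.
- have [serial|dead_end] := pselect (exists y, Rel x y); last first.
    by rewrite evalA_box_dead_end // evalL_box_dead_end // subrr mulr0.
  rewrite evalA_box_serial // evalL_box_serial // mulrBr mulr1 -inf_affine //.
    rewrite image_comp; congr inf; apply: eq_imagel => y _ /=.
    by rewrite IH mulrBr mulr1.
  split; first by case: serial => y Rxy; exists (evalL Rel VL g y), y.
  by exists 0 => _ [y _ <-]; case/andP: (evalL_ge0_le1 Rel VL_ge0_le1 g y).
Qed.

End Translation.

Section Valuations.
Variables (W : Type) (V : nat -> W -> real) (a : real).
Hypothesis a_ge0 : 0 <= a.

(* For a = 0 the junk value x / 0 = 0 makes this the constant valuation 1. *)
Definition rescale_valuation : nat -> W -> real :=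
  fun p x => 1 + Num.max (Num.min (V p x) 0) (- a) / a.

Lemma rescale_valuation_ge0_le1 p x : 0 <= rescale_valuation p x <= 1.
Proof.
rewrite /rescale_valuation; set t := Num.max _ _.
have /andP[t_ge t_le0] : - a <= t <= 0 by exact: clamp_ge_le.
have [a0|a_neq0] := eqVneq a 0; first by rewrite a0 invr0 mulr0 addr0 ler01 lexx.
have a_gt0 : 0 < a by rewrite lt_def a_neq0.
have t_eq : t = t / a * a by rewrite divfK.
apply/andP; split; nra.
Qed.

Lemma clamp_rescale_valuation p x :
  Num.max (Num.min (V p x) 0) (- a) = a * (rescale_valuation p x - 1).
Proof.
rewrite /rescale_valuation addrAC subrr add0r; set t := Num.max _ _.
have [a0|a_neq0] := eqVneq a 0; last by rewrite mulrC divfK.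
have /andP[t_ge t_le0] : - a <= t <= 0 by exact: clamp_ge_le.
rewrite a0 oppr0 in t_ge.
by rewrite a0 mul0r; apply/le_anti/andP.
Qed.

End Valuations.

Section ShiftedValuation.
Variables (W : Type) (Rel : W -> W -> Prop) (VL : nat -> W -> real).
Hypothesis VL_ge0_le1 : forall p x, 0 <= VL p x <= 1.

Lemma shift_KA_model : inhabited W -> KA_model Rel (fun p x => VL p x - 1).
Proof.
move=> inhW; split => //; exists 1; split => // p x.
by case/andP: (VL_ge0_le1 p x) => ? ?; apply/andP; split; lra.
Qed.

Lemma clamp_shift_valuation p x :
  Num.max (Num.min (VL p x - 1) 0) (- `|1|) = `|1| * (VL p x - 1).
Proof.
case/andP: (VL_ge0_le1 p x) => VL_ge0 VL_le1.
by rewrite normr1 mul1r min_l ?max_l //; lra.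
Qed.

End ShiftedValuation.

Theorem proposition2p3 (f : fmL) : KL_valid f <-> KA_valid (trans f).
Proof.
split=> [valid W Rel V c [inhW _] x | valid W Rel VL [inhW VL_ge0_le1] x].
- have a_ge0 : 0 <= `|c| := normr_ge0 c.
  rewrite (evalA_trans Rel (rescale_valuation_ge0_le1 V a_ge0)
                            (clamp_rescale_valuation V a_ge0)).
  by rewrite valid ?subrr ?mulr0 //; split => //; exact: rescale_valuation_ge0_le1.
- have := valid W Rel _ 1 (shift_KA_model Rel VL_ge0_le1 inhW) x.
  rewrite (evalA_trans Rel VL_ge0_le1 (clamp_shift_valuation VL_ge0_le1)).
  rewrite normr1 mul1r subr_ge0 => evalL_ge1; apply: le_anti.
  by rewrite evalL_ge1 andbT; case/andP: (evalL_ge0_le1 Rel VL_ge0_le1 f x).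
Qed.
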